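(* Let $\mathsf d_Y\le\mathsf d_X$, let $C(\theta_1)$ be a symmetric positive definite $\mathsf d_X\times\mathsf d_X$ matrix depending differentiably on $\theta_1\in\mathbb R^{\mathsf p_1}$, and let $H_x$ be a $\mathsf d_Y\times\mathsf d_X$ matrix with $\mathrm{rank}(H_x)=\mathsf d_Y$; set $V=H_xCH_x^\star$. Then, at any fixed $\theta_1$, $$\mathrm{Tr}\big\{V^{-1}H_x(\partial_1C)H_x^\star V^{-1}H_x(\partial_1C)H_x^\star\big\}\le\mathrm{Tr}\big\{C^{-1}(\partial_1C)C^{-1}\partial_1C\big\}$$ in the partial order of symmetric $\mathsf p_1\times\mathsf p_1$ matrices.
   Context: Here $\star$ denotes transpose and $\partial_1C$ the collection $(\partial_{\theta_{1,k}}C)_{k=1}^{\mathsf p_1}$; for matrices $P,Q$ of matching sizes, $\mathrm{Tr}\{P(\partial_1C)Q\,\partial_1C\}$ denotes the $\mathsf p_1\times\mathsf p_1$ matrix whose $(k,l)$ entry is $\mathrm{Tr}\{P(\partial_{\theta_{1,k}}C)Q\,\partial_{\theta_{1,l}}C\}$ (and analogously for the left-hand side with $H_x(\partial_{\theta_{1,k}}C)H_x^\star$). For symmetric matrices, $M_1\le M_2$ means $M_2-M_1$ is nonnegative definite. In the paper this is applied with $C=C(z,\theta_1^* )$, $H_x=H_x(z,\theta_3^* )$ at each point $z$. *)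

From HB Require Import structures.
From mathcomp Require Import all_boot all_order all_algebra.
From mathcomp Require Import all_classical all_reals all_analysis.
Set Implicit Arguments. Unset Strict Implicit. Unset Printing Implicit Defensive.
Import Order.TTheory GRing.Theory Num.Theory.
Import numFieldNormedType.Exports.
Local Open Scope ring_scope.

Definition sym_posdef {R : realType} {n : nat} (A : 'M[R]_n) : Prop :=
  A^T = A /\ forall x : 'cV[R]_n, x != 0 -> 0 < (x^T *m A *m x) 0 0.

Definition nonneg_def {R : realType} {n : nat} (A : 'M[R]_n) : Prop :=
  forall x : 'cV[R]_n, 0 <= (x^T *m A *m x) 0 0.

Definition loewner_le {R : realType} {n : nat} (M1 M2 : 'M[R]_n) : Prop :=
  M1^T = M1 /\ M2^T = M2 /\ nonneg_def (M2 - M1).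

Definition partial {R : realType} {p m n : nat}
  (C : 'rV[R]_p -> 'M[R]_(m, n)) (k : 'I_p) (theta : 'rV[R]_p) : 'M[R]_(m, n) :=
  'D_(delta_mx 0 k) C theta.

Definition tr_mat {R : realType} {p d : nat} (P Q : 'M[R]_d) (D : 'I_p -> 'M[R]_d)
  : 'M[R]_p := \matrix_(k, l) \tr (P *m D k *m Q *m D l).

(* Put Q := H^T (H C H^T)^-1 H and K := C^-1 - Q. Both are symmetric and
   idempotent relative to C (Q C Q = Q, K C K = K), hence nonnegative
   definite. For a symmetric D the gap
   Tr(C^-1 D C^-1 D) - Tr(Q D Q D) = Tr(K D K D) + 2 Tr(K D Q D)
   is a sum of terms Tr(K D A D) = Tr(C (DK)^T A (DK)) with A nonnegative,
   and the trace of a positive definite matrix times a nonnegative definite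
   one is nonnegative (by induction, peeling off a Schur complement). Taking
   D = sum_k x_k d_k C turns the p x p matrix inequality into this scalar one. *)
From HB Require Import structures.
From mathcomp Require Import all_boot all_order all_algebra.
From mathcomp Require Import all_classical all_reals all_analysis.
From mathcomp Require Import lra.
Set Implicit Arguments. Unset Strict Implicit. Unset Printing Implicit Defensive.
Import Order.TTheory GRing.Theory Num.Theory.
Import numFieldNormedType.Exports.
Local Open Scope ring_scope.

Section DefiniteMatrices.
Variable R : realType.

Lemma nonneg_def_congr m n (M : 'M[R]_m) (X : 'M[R]_(m, n)) :
  nonneg_def M -> nonneg_def (X^T *m M *m X).
Proof.
move=> M_ge0 x.
have -> : x^T *m (X^T *m M *m X) *m x = (X *m x)^T *m M *m (X *m x).
  by rewrite trmx_mul !mulmxA.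
exact: M_ge0.
Qed.

Lemma sym_posdef_nonneg n (A : 'M[R]_n) : sym_posdef A -> nonneg_def A.
Proof.
move=> [_ A_gt0] x; have [->|x0] := eqVneq x 0; first by rewrite mulmx0 mxE.
exact/ltW/A_gt0.
Qed.

Lemma sym_posdef_unit n (A : 'M[R]_n) : sym_posdef A -> A \in unitmx.
Proof.
move=> [_ A_gt0]; rewrite unitmxE unitfE; apply/negP => /det0P[v v0 vA0].
have /A_gt0 : v^T != 0 by rewrite trmx_eq0.
by rewrite trmxK vA0 mul0mx mxE ltxx.
Qed.

Lemma sym_posdef_congr m n (A : 'M[R]_n) (X : 'M[R]_(m, n)) :
  sym_posdef A -> row_free X -> sym_posdef (X *m A *m X^T).
Proof.
move=> [A_sym A_gt0] X_free; split; first by rewrite !trmx_mul trmxK A_sym mulmxA.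
move=> x x0; have -> : x^T *m (X *m A *m X^T) *m x = (X^T *m x)^T *m A *m (X^T *m x).
  by rewrite trmx_mul trmxK !mulmxA.
apply: A_gt0; apply: contraNneq x0 => Xx0.
have : x^T *m X == 0 by rewrite -[X]trmxK -trmx_mul Xx0 trmx0.
by rewrite mulmx_free_eq0 // trmx_eq0.
Qed.

Lemma quad_col_mx p1 p2 (a : 'M[R]_p1) b c (d : 'M[R]_p2)
    (x1 : 'cV[R]_p1) (x2 : 'cV[R]_p2) :
  (col_mx x1 x2)^T *m block_mx a b c d *m col_mx x1 x2 =
  x1^T *m a *m x1 + x1^T *m b *m x2 + (x2^T *m c *m x1 + x2^T *m d *m x2).
Proof. by rewrite tr_col_mx mul_row_block mul_row_col !mulmxDl addrACA. Qed.

(* Gaussian elimination of the first row and column: the lower block S is the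
   Schur complement of the corner entry. *)
Lemma sym_posdef_schur n (A : 'M[R]_(1 + n)) : sym_posdef A ->
  exists a (S : 'M[R]_n) (E : 'M[R]_(1 + n)),
    [/\ 0 < a, sym_posdef S & A = E^T *m block_mx a%:M 0 0 S *m E].
Proof.
move=> [A_sym A_gt0].
set a := ulsubmx A 0 0; set u := ursubmx A; set d := drsubmx A.
have Aa : ulsubmx A = a%:M by apply: mx11_scalar.
have Au : dlsubmx A = u^T by rewrite /u trmx_ursub A_sym.
have d_sym : d^T = d by rewrite /d trmx_drsub A_sym.
have A_block : A = block_mx a%:M u u^T d by rewrite -Aa -Au submxK.
have a_gt0 : 0 < a.
  have := A_gt0 (col_mx 1%:M 0).
  rewrite A_block quad_col_mx trmx1 trmx0 !mulmx0 !mul0mx !mul1mx !mulmx1 !addr0.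
  rewrite mxE eqxx mulr1n; apply; rewrite col_mx_eq0 negb_and.
  by apply/orP; left; apply/eqP => /matrixP/(_ 0 0); rewrite !mxE; apply/eqP/oner_neq0.
have a0 : a != 0 by rewrite gt_eqF.
set S := d - a^-1 *: (u^T *m u).
set E : 'M[R]_(1 + n) := block_mx 1%:M (a^-1 *: u) 0 1%:M.
have A_E : A = E^T *m block_mx a%:M 0 0 S *m E.
  rewrite /E tr_block_mx !mulmx_block A_block.
  rewrite !trmx1 trmx0 !mul1mx !mul0mx !mulmx0 !mulmx1 !addr0 !add0r.
  rewrite mul_scalar_mx mul_mx_scalar scalerA mulfV // scale1r.
  rewrite [(_ *: u)^T]linearZ /= scalerA mulfV // scale1r -scalemxAr.
  by rewrite /S addrC subrK.
exists a, S, E; split=> //; split.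
  by rewrite /S linearB /= linearZ /= trmx_mul trmxK d_sym.
move=> y y0.
set z := col_mx (- (a^-1 *: (u *m y))) y.
have Ez : E *m z = col_mx 0 y.
  by rewrite /E mul_block_col !mul1mx mul0mx add0r -scalemxAl addNr.
have := A_gt0 z.
have -> : z^T *m A *m z = (E *m z)^T *m block_mx a%:M 0 0 S *m (E *m z).
  by rewrite {1}A_E trmx_mul !mulmxA.
rewrite Ez quad_col_mx trmx0 !mulmx0 !mul0mx !add0r.
by apply; rewrite col_mx_eq0 negb_and y0 orbT.
Qed.

Lemma mxtrace_posdef_mul_ge0 n (A M : 'M[R]_n) :
  sym_posdef A -> nonneg_def M -> 0 <= \tr (A *m M).
Proof.
elim: n A M => [|n IH] A M A_pd M_ge0; first by rewrite /mxtrace big_ord0.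
have [a [S [E [a_gt0 S_pd A_E]]]] := @sym_posdef_schur n A A_pd.
set N := E *m M *m E^T.
have N_ge0 : nonneg_def N by rewrite /N -{1}(trmxK E); apply: nonneg_def_congr.
have -> : \tr (A *m M) = \tr (block_mx a%:M 0 0 S *m N).
  by rewrite A_E -!mulmxA mxtrace_mulC !mulmxA.
rewrite -(submxK N) mulmx_block !mul0mx !addr0 !add0r mxtrace_block.
apply: addr_ge0.
  rewrite mul_scalar_mx mxtraceZ /mxtrace big_ord1; apply: mulr_ge0; first exact: ltW.
  have := N_ge0 (col_mx 1%:M 0).
  by rewrite -{1}(submxK N) quad_col_mx trmx1 trmx0 !mulmx0 !mul0mx !mul1mx !mulmx1 !addr0.
apply: IH => // y; have := N_ge0 (col_mx 0 y).
by rewrite -{1}(submxK N) quad_col_mx trmx0 !mulmx0 !mul0mx !add0r.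
Qed.

(* The factorisation K = K C K lets C absorb the outer factors of the trace. *)
Lemma mxtrace_sandwich_ge0 n (C K D A : 'M[R]_n) :
  sym_posdef C -> K^T = K -> K *m C *m K = K -> D^T = D -> nonneg_def A ->
  0 <= \tr (K *m D *m A *m D).
Proof.
move=> C_pd K_sym KCK D_sym A_ge0.
rewrite -{1}KCK -!mulmxA mxtrace_mulC !mulmxA.
have := mxtrace_posdef_mul_ge0 C_pd (nonneg_def_congr (D *m K) A_ge0).
by rewrite trmx_mul K_sym D_sym !mulmxA.
Qed.

End DefiniteMatrices.

Section Projection.
Variables (R : realType) (m n : nat) (C : 'M[R]_n) (H : 'M[R]_(m, n)).
Hypotheses (C_pd : sym_posdef C) (H_free : row_free H).

Let V := H *m C *m H^T.
Let Q := H^T *m invmx V *m H.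
Let K := invmx C - Q.

Let C_sym : C^T = C. Proof. by case: C_pd. Qed.
Let V_pd : sym_posdef V. Proof. exact: sym_posdef_congr. Qed.
Let Vi_sym : (invmx V)^T = invmx V. Proof. by rewrite trmx_inv; case: V_pd => ->. Qed.

Let Q_sym : Q^T = Q. Proof. by rewrite /Q !trmx_mul trmxK Vi_sym mulmxA. Qed.
Let K_sym : K^T = K. Proof. by rewrite /K linearB /= trmx_inv C_sym Q_sym. Qed.

Let QCQ : Q *m C *m Q = Q.
Proof.
have -> : Q *m C *m Q = H^T *m (invmx V *m V) *m invmx V *m H by rewrite !mulmxA.
by rewrite mulVmx ?mulmx1 // sym_posdef_unit.
Qed.

Let KCK : K *m C *m K = K.
Proof.
have C_unit := sym_posdef_unit C_pd.
rewrite /K mulmxBl mulVmx // mulmxBl mul1mx mulmxBr -mulmxA mulmxV // mulmx1.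
by rewrite QCQ subrr subr0.
Qed.

Let Q_ge0 : nonneg_def Q.
Proof.
rewrite -QCQ -{1}Q_sym; apply/nonneg_def_congr/sym_posdef_nonneg.
exact: C_pd.
Qed.

Let K_ge0 : nonneg_def K.
Proof. by rewrite -KCK -{1}K_sym; apply/nonneg_def_congr/sym_posdef_nonneg. Qed.

Lemma mxtrace_proj_le (D : 'M[R]_n) : D^T = D ->
  \tr (Q *m D *m Q *m D) <= \tr (invmx C *m D *m invmx C *m D).
Proof.
move=> D_sym; have -> : invmx C = Q + K by rewrite /K addrC subrK.
clearbody K; rewrite !mulmxDl !mulmxDr !mulmxDl !mxtraceD.
have := mxtrace_sandwich_ge0 C_pd K_sym KCK D_sym Q_ge0.
have := mxtrace_sandwich_ge0 C_pd K_sym KCK D_sym K_ge0.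
have -> : \tr (Q *m D *m K *m D) = \tr (K *m D *m Q *m D).
  by rewrite -[Q *m D *m K *m D]mulmxA mxtrace_mulC !mulmxA.
lra.
Qed.

End Projection.

Lemma tr_mat_sym (R : realType) p d (P : 'M[R]_d) (D : 'I_p -> 'M[R]_d) :
  (tr_mat P P D)^T = tr_mat P P D.
Proof.
by apply/matrixP => k l; rewrite !mxE -[P *m D l *m P *m D k]mulmxA mxtrace_mulC !mulmxA.
Qed.

Lemma tr_mat_quad (R : realType) p d (P Q : 'M[R]_d) (D : 'I_p -> 'M[R]_d)
    (x : 'cV[R]_p) :
  (x^T *m tr_mat P Q D *m x) 0 0 =
  \tr (P *m (\sum_k x k 0 *: D k) *m Q *m (\sum_k x k 0 *: D k)).
Proof.
have -> : P *m (\sum_k x k 0 *: D k) *m Q *m (\sum_k x k 0 *: D k) =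
    \sum_l \sum_k (x k 0 * x l 0) *: (P *m D k *m Q *m D l).
  rewrite mulmx_sumr; apply: eq_bigr => l _.
  rewrite mulmx_sumr !mulmx_suml; apply: eq_bigr => k _.
  by rewrite -!scalemxAr -!scalemxAl scalerA mulrC.
rewrite linear_sum mxE /=; apply: eq_bigr => l _.
rewrite mxE big_distrl linear_sum /=; apply: eq_bigr => k _.
by rewrite !mxE mxtraceZ mulrAC mulrC.
Qed.

Lemma partial_sym (R : realType) p n (C : 'rV[R]_p -> 'M[R]_n) k th :
  (forall t, (C t)^T = C t) -> differentiable C th ->
  (partial C k th)^T = partial C k th.
Proof.
move=> C_sym /diff_derivable C_der.
rewrite /partial derive_mx //; apply/matrixP => i j; rewrite !mxE.
suff -> : (fun t => C t j i) = (fun t => C t i j) by [].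
by apply/funext => t; rewrite -{1}C_sym mxE.
Qed.

Theorem proposition13p1 (R : realType) (dX dY p1 : nat)
  (C : 'rV[R]_p1 -> 'M[R]_dX) (Hx : 'M[R]_(dY, dX)) (theta1 : 'rV[R]_p1) :
  (dY <= dX)%N ->
  (forall th : 'rV[R]_p1, sym_posdef (C th)) ->
  (forall th : 'rV[R]_p1, differentiable C th) ->
  \rank Hx = dY ->
  let V := Hx *m C theta1 *m Hx^T in
  loewner_le
    (tr_mat (invmx V) (invmx V) (fun k => Hx *m partial C k theta1 *m Hx^T))
    (tr_mat (invmx (C theta1)) (invmx (C theta1)) (fun k => partial C k theta1)).
Proof.
move=> _ C_pd C_diff Hx_rank V.
have Hx_free : row_free Hx by rewrite /row_free Hx_rank.
split; first exact: tr_mat_sym.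
split; first exact: tr_mat_sym.
move=> x; rewrite mulmxBr mulmxBl [leRHS]mxE [X in _ + X]mxE subr_ge0 !tr_mat_quad.
set D := \sum_k x k 0 *: partial C k theta1.
have D_sym : D^T = D.
  rewrite linear_sum; apply: eq_bigr => k _; rewrite linearZ /= partial_sym //.
  by move=> t; case: (C_pd t).
have -> : \sum_k x k 0 *: (Hx *m partial C k theta1 *m Hx^T) = Hx *m D *m Hx^T.
  by rewrite mulmx_sumr mulmx_suml; apply: eq_bigr => k _; rewrite -scalemxAr -scalemxAl.
rewrite !mulmxA [leLHS]mxtrace_mulC.
by have := mxtrace_proj_le (C_pd theta1) Hx_free D_sym; rewrite !mulmxA.
Qed.
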